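(* A quasivariety $\mathsf{K}$ has the weak ES property if and only if no finitely generated $\mathbf{B} \in \mathsf{K}$ has a proper subalgebra $\mathbf{A} \leq \mathbf{B}$ that is both almost total and epic in $\mathsf{K}$.
   Context: A quasivariety is a class of similar algebras closed under isomorphic copies, subalgebras, direct products and ultraproducts. For a class $\mathsf{K}$, a homomorphism $f\colon \mathbf{A}\to\mathbf{B}$ with $\mathbf{A},\mathbf{B}\in\mathsf{K}$ is a $\mathsf{K}$-epimorphism if for all $\mathbf{C}\in\mathsf{K}$ and homomorphisms $g,h\colon\mathbf{B}\to\mathbf{C}$, $g\circ f=h\circ f$ implies $g=h$. A quasivariety $\mathsf{K}$ has the weak ES property if every $\mathsf{K}$-epimorphism between finitely generated members of $\mathsf{K}$ is surjective. For $\mathbf{B}\in\mathsf{K}$, a subalgebra $\mathbf{A}\leq\mathbf{B}$ is epic in $\mathsf{K}$ if the inclusion map $\mathbf{A}\to\mathbf{B}$ is a $\mathsf{K}$-epimorphism, i.e., for all $\mathbf{C}\in\mathsf{K}$ and homomorphisms $g,h\colon\mathbf{B}\to\mathbf{C}$, $g{\upharpoonright}_A=h{\upharpoonright}_A$ implies $g=h$. $\mathbf{A}\leq\mathbf{B}$ is almost total if there is $b\in B$ with $B=\mathrm{Sg}^{\mathbf{B}}(A\cup\{b\})$, where $\mathrm{Sg}^{\mathbf{B}}(X)$ is the subuniverse of $\mathbf{B}$ generated by $X$. *)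

From Stdlib Require List.
From mathcomp Require Import all_boot.
Set Implicit Arguments. Unset Strict Implicit. Unset Printing Implicit Defensive.

Record signature := Signature { op : Type ; arity : op -> nat }.

(** Algebras of a signature; following the usual convention of universal
    algebra, carriers are nonempty. *)
Record algebra (S : signature) := Algebra {
  carrier :> Type ;
  ops : forall f : op S, ('I_(arity f) -> carrier) -> carrier ;
  carrier_inh : inhabited carrier }.
Arguments ops {S} _ f _.

Definition surjective (X Y : Type) (h : X -> Y) : Prop := forall y : Y, exists x : X, h x = y.

Section Defs.
Variable S : signature.

Definition is_hom (A B : algebra S) (h : A -> B) : Prop :=
  forall (f : op S) (a : 'I_(arity f) -> A),
    h (ops A f a) = ops B f (fun j => h (a j)).

Definition is_hom_into_prod (I : Type) (F : I -> algebra S) (C : algebra S)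
  (h : C -> forall i, F i) : Prop :=
  forall (f : op S) (a : 'I_(arity f) -> C) (i : I),
    h (ops C f a) i = ops (F i) f (fun j => h (a j) i).

Definition is_hom_from_prod (I : Type) (F : I -> algebra S) (C : algebra S)
  (h : (forall i, F i) -> C) : Prop :=
  forall (f : op S) (x : 'I_(arity f) -> forall i, F i),
    h (fun i => ops (F i) f (fun j => x j i)) = ops C f (fun j => h (x j)).

Definition ultrafilter (I : Type) (U : (I -> Prop) -> Prop) : Prop :=
  [/\ U (fun _ => True),
      ~ U (fun _ => False),
      (forall X Y : I -> Prop, U X -> (forall i, X i -> Y i) -> U Y),
      (forall X Y : I -> Prop, U X -> U Y -> U (fun i => X i /\ Y i)) &
      (forall X : I -> Prop, U X \/ U (fun i => ~ X i))].

(** A quasivariety: a class closed under isomorphic copies and subalgebras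
    (together: under embeddings), direct products and ultraproducts
    (up to isomorphism). *)
Definition quasivariety (K : algebra S -> Prop) : Prop :=
  [/\
      (forall (A B : algebra S) (h : A -> B),
          is_hom h -> injective h -> K B -> K A),
      (forall (I : Type) (F : I -> algebra S), (forall i, K (F i)) ->
        forall (C : algebra S) (h : C -> forall i, F i),
          is_hom_into_prod h -> bijective h -> K C) &
      (* P_U: C is isomorphic to the ultraproduct prod_i F i / U *)
      (forall (I : Type) (F : I -> algebra S) (U : (I -> Prop) -> Prop),
        ultrafilter U -> (forall i, K (F i)) ->
        forall (C : algebra S) (h : (forall i, F i) -> C),
          is_hom_from_prod h -> surjective h ->
          (forall x y, h x = h y <-> U (fun i => x i = y i)) -> K C)].

Definition subuniverse (B : algebra S) (X : B -> Prop) : Prop :=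
  forall (f : op S) (a : 'I_(arity f) -> B), (forall j, X (a j)) -> X (ops B f a).

Definition Sg (B : algebra S) (X : B -> Prop) : B -> Prop :=
  fun b => forall Y : B -> Prop, subuniverse Y -> (forall x, X x -> Y x) -> Y b.

Definition finitely_generated (B : algebra S) : Prop :=
  exists l : list B, forall b : B, Sg (fun x => List.In x l) b.

Definition K_epimorphism (K : algebra S -> Prop) (A B : algebra S) (h : A -> B) : Prop :=
  [/\ K A, K B, is_hom h &
     forall (C : algebra S) (g1 g2 : B -> C), K C -> is_hom g1 -> is_hom g2 ->
       (forall a, g1 (h a) = g2 (h a)) -> forall b, g1 b = g2 b].

Definition weak_ES (K : algebra S -> Prop) : Prop :=
  forall (A B : algebra S) (h : A -> B),
    finitely_generated A -> finitely_generated B ->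
    K_epimorphism K h -> surjective h.

(** Subalgebras of B are represented by their (nonempty) universes. *)
Definition subalgebra_univ (B : algebra S) (X : B -> Prop) : Prop :=
  subuniverse X /\ exists x, X x.

(** The subalgebra with universe X is epic in K (inclusion is a K-epimorphism;
    the subalgebra of B in K is itself in K when K is a quasivariety). *)
Definition epic_in (K : algebra S -> Prop) (B : algebra S) (X : B -> Prop) : Prop :=
  forall (C : algebra S) (g1 g2 : B -> C), K C -> is_hom g1 -> is_hom g2 ->
    (forall a, X a -> g1 a = g2 a) -> forall b, g1 b = g2 b.

Definition almost_total (B : algebra S) (X : B -> Prop) : Prop :=
  exists b : B, forall y : B, Sg (fun x => X x \/ x = b) y.

Definition proper_univ (B : algebra S) (X : B -> Prop) : Prop :=
  exists b : B, ~ X b.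

End Defs.

From mathcomp Require Import all_boot.
From Stdlib Require Import Classical ClassicalEpsilon FunctionalExtensionality.
From Stdlib Require Import ProofIrrelevance PropExtensionality.
From mathcomp Require classical_sets filter.

(* If h : A -> B is a non-surjective K-epimorphism between finitely generated
   algebras, adjoin the generators of B to the image of h one at a time for as
   long as the result stays proper: the last proper stage becomes all of B
   after adjoining a single element, so it is an almost total subalgebra, and
   it is epic because it contains the image of h.
   Conversely, an epic subalgebra X of B is epic "on a finite part": if no
   finite subset of X determined b in B, the pairs of homomorphisms witnessing
   this, assembled into an ultraproduct over the finite subsets of X, would
   agree on X but not at b.  Hence when B is finitely generated and X is proper
   and epic, some finitely generated subalgebra of X is still epic, and its
   inclusion into B is a non-surjective epimorphism. *)

Set Implicit Arguments. Unset Strict Implicit. Unset Printing Implicit Defensive.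

Module Ultrafilter.
Import classical_sets filter.

Lemma ultrafilter_superset (I : Type) (F : (I -> Prop) -> Prop) :
  F (fun _ => True) ->
  (forall X Y, F X -> F Y -> F (fun i => X i /\ Y i)) ->
  (forall X Y : I -> Prop, F X -> (forall i, X i -> Y i) -> F Y) ->
  (forall X, F X -> exists i, X i) ->
  exists U, ultrafilter U /\ forall X, F X -> U X.
Proof.
move=> FT FI FS Fex.
have FF : ProperFilter F.
  apply: Build_ProperFilter_ex => //; split => // P Q PQ FP.
  exact: FS FP _.
have [G [GU sFG]] := ultraFilterLemma FF.
exists G; split => //; split.
- exact: filterT.
- exact: filter_not_empty.
- by move=> X Y GX XY; apply: filterS GX.
- by move=> X Y; apply: filterI.
- by move=> X; apply: in_ultra_setVsetC.
Qed.

End Ultrafilter.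

Lemma ultrafilter_forall_seq (I T : Type) (U : (I -> Prop) -> Prop)
    (P : T -> I -> Prop) (s : seq T) :
  ultrafilter U -> (forall j, U (P j)) ->
  U (fun i => forall j, List.In j s -> P j i).
Proof.
case=> UT _ US UI _ UP; elim: s => [|j s IHs] /=.
  by apply: US UT _ => i _ j [].
by apply: US (UI _ _ (UP j) IHs) _ => i [Pj Ps] k [<-|/Ps].
Qed.

Lemma ultrafilter_forall_ord (I : Type) (U : (I -> Prop) -> Prop) n
    (P : 'I_n -> I -> Prop) :
  ultrafilter U -> (forall j, U (P j)) -> U (fun i => forall j, P j i).
Proof.
move=> Uultra UP; have [_ _ US _ _] := Uultra.
apply: US (ultrafilter_forall_seq (enum 'I_n) Uultra UP) _ => i Pi j.
apply: Pi; move: (mem_enum 'I_n j); rewrite inE.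
by elim: (enum 'I_n) => //= k s IHs; rewrite inE => /orP [/eqP ->|/IHs]; auto.
Qed.

Section Ultraproduct.
Variables (S : signature) (I : Type) (F : I -> algebra S).
Variables (U : (I -> Prop) -> Prop) (U_ultra : ultrafilter U).

Definition eqU (x y : forall i, F i) : Prop := U (fun i => x i = y i).

Lemma eqU_refl x : eqU x x.
Proof. by have [UT _ US _ _] := U_ultra; apply: US UT _. Qed.

Lemma eqU_sym x y : eqU x y -> eqU y x.
Proof. by have [_ _ US _ _] := U_ultra => Uxy; apply: US Uxy _. Qed.

Lemma eqU_trans x y z : eqU x y -> eqU y z -> eqU x z.
Proof.
have [_ _ US UI _] := U_ultra => Uxy Uyz.
by apply: US (UI _ _ Uxy Uyz) _ => i [-> ->].
Qed.

(* The ultraproduct is the quotient by [eqU], realised as the type of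
   equivalence classes. *)
Definition eqU_class (x : forall i, F i) : (forall i, F i) -> Prop := eqU x.

Lemma eqU_class_eq x y : eqU_class x = eqU_class y <-> eqU x y.
Proof.
split => [exy|Uxy].
  by have : eqU_class y y := eqU_refl y; rewrite -exy.
apply: functional_extensionality => z; apply: propositional_extensionality.
split; first exact: eqU_trans (eqU_sym Uxy).
exact: eqU_trans Uxy.
Qed.

Definition ultraprod_type := {P : (forall i, F i) -> Prop | exists x, P = eqU_class x}.

Definition ultraprod_proj (x : forall i, F i) : ultraprod_type :=
  exist _ (eqU_class x) (ex_intro _ x erefl).

Definition ultraprod_repr (c : ultraprod_type) : forall i, F i :=
  proj1_sig (constructive_indefinite_description _ (proj2_sig c)).

Lemma ultraprod_proj_eq x y : ultraprod_proj x = ultraprod_proj y <-> eqU x y.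
Proof.
rewrite -eqU_class_eq; split => [/(f_equal (@proj1_sig _ _)) //|exy].
by apply: eq_sig_hprop => // P p q; apply: proof_irrelevance.
Qed.

Lemma ultraprod_projK c : ultraprod_proj (ultraprod_repr c) = c.
Proof.
apply: eq_sig_hprop => [P p q|]; first exact: proof_irrelevance.
rewrite /ultraprod_repr; case: constructive_indefinite_description => x /= ->.
by case: c.
Qed.

Lemma ultraprod_inh : inhabited ultraprod_type.
Proof.
exact: inhabits (ultraprod_proj (fun i => epsilon (carrier_inh (F i)) (fun _ => True))).
Qed.

Definition ultraprod : algebra S :=
  @Algebra S ultraprod_type
    (fun f c => ultraprod_proj (fun i => ops (F i) f (fun j => ultraprod_repr (c j) i)))
    ultraprod_inh.

Lemma ultraprod_proj_hom : is_hom_from_prod (C := ultraprod) ultraprod_proj.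
Proof.
move=> f x; apply/ultraprod_proj_eq.
have Ux j : U (fun i => x j i = ultraprod_repr (ultraprod_proj (x j)) i).
  by apply/ultraprod_proj_eq; rewrite ultraprod_projK.
have [_ _ US _ _] := U_ultra.
apply: US (ultrafilter_forall_ord U_ultra Ux) _ => i xi.
by congr (ops (F i) f); apply: functional_extensionality.
Qed.

Lemma ultraprod_proj_surjective : surjective (ultraprod_proj : _ -> ultraprod).
Proof. by move=> c; exists (ultraprod_repr c); apply: ultraprod_projK. Qed.

Lemma ultraprod_hom (B : algebra S) (g : forall i, B -> F i) :
  (forall i, is_hom (g i)) ->
  is_hom (B := ultraprod) (fun b => ultraprod_proj (fun i => g i b)).
Proof.
move=> g_hom f a.
have -> : (fun i => g i (ops B f a)) = (fun i => ops (F i) f (fun j => g i (a j))).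
  by apply: functional_extensionality_dep => i; apply: g_hom.
exact: (ultraprod_proj_hom (fun j i => g i (a j))).
Qed.

Lemma quasivariety_ultraprod (K : algebra S -> Prop) :
  quasivariety K -> (forall i, K (F i)) -> K ultraprod.
Proof.
case=> _ _ KPU KF; apply: (KPU I F U U_ultra KF _ _ ultraprod_proj_hom).
  exact: ultraprod_proj_surjective.
by move=> x y; apply: ultraprod_proj_eq.
Qed.

End Ultraproduct.

Section Subuniverses.
Variables (S : signature) (B : algebra S).
Implicit Types (X Y : B -> Prop).

Lemma Sg_subuniverse X : subuniverse (Sg X).
Proof. by move=> f a Sa; rewrite /Sg => Y Ysub XY; apply: (Ysub) => j; apply: Sa. Qed.

Lemma Sg_incl X x : X x -> Sg X x.
Proof. by move=> Xx Y _; apply. Qed.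

Lemma Sg_min X Y : subuniverse Y -> (forall x, X x -> Y x) -> forall x, Sg X x -> Y x.
Proof. by move=> Ysub XY x; apply. Qed.

Lemma equalizer_subuniverse (C : algebra S) (g1 g2 : B -> C) :
  is_hom g1 -> is_hom g2 -> subuniverse (fun b => g1 b = g2 b).
Proof.
move=> g1_hom g2_hom f a ga; rewrite g1_hom g2_hom; congr (ops C f).
exact: functional_extensionality.
Qed.

Lemma hom_eq_on_Sg (C : algebra S) (g1 g2 : B -> C) X :
  is_hom g1 -> is_hom g2 -> (forall x, X x -> g1 x = g2 x) ->
  forall b, Sg X b -> g1 b = g2 b.
Proof. by move=> g1_hom g2_hom; apply: Sg_min; apply: equalizer_subuniverse. Qed.

Lemma image_subuniverse (A : algebra S) (h : A -> B) :
  is_hom h -> subuniverse (fun b => exists a, h a = b).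
Proof.
move=> h_hom f b hb; have [a ha] := choice _ hb.
by exists (ops A f a); rewrite h_hom; congr (ops B f); apply: functional_extensionality.
Qed.

Lemma proper_almost_total_extension (l : list B) X :
  subuniverse X -> proper_univ X -> (forall y, Sg (fun x => X x \/ List.In x l) y) ->
  exists Y, [/\ subuniverse Y, (forall x, X x -> Y x), proper_univ Y & almost_total Y].
Proof.
elim: l X => [|c l IHl] X Xsub [b Xb] Xl_gen.
  by case: Xb; apply: Sg_min (Xl_gen b) => // x [].
have [[b' Xc_b']|Xc_total] := classic (proper_univ (Sg (fun x => X x \/ x = c))).
  have Xc_l_gen y : Sg (fun x => Sg (fun x => X x \/ x = c) x \/ List.In x l) y.
    apply: Sg_min (Xl_gen y) => [|x]; first exact: Sg_subuniverse.
    by case=> [Xx|/= [<-|lx]]; apply: Sg_incl; [left; apply: Sg_incl; left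
      |left; apply: Sg_incl; right|right].
  have [Y [Ysub XcY Yproper Ytotal]] :=
    IHl _ (@Sg_subuniverse _) (ex_intro _ b' Xc_b') Xc_l_gen.
  by exists Y; split => // x Xx; apply: XcY; apply: Sg_incl; left.
exists X; split => //; first by exists b.
by exists c => y; apply: NNPP => Xc_y; apply: Xc_total; exists y.
Qed.

End Subuniverses.

Section Subalgebra.
Variables (S : signature) (B : algebra S) (Y : B -> Prop).
Variables (Y_sub : subuniverse Y) (y0 : B) (Y_y0 : Y y0).

Definition subalg : algebra S :=
  @Algebra S {b : B | Y b}
    (fun f a => exist _ (ops B f (fun j => sval (a j))) (Y_sub (fun j => proj2_sig (a j))))
    (inhabits (exist _ y0 Y_y0)).

Lemma subalg_incl_hom : is_hom (sval : subalg -> B).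
Proof. by []. Qed.

Lemma subalg_incl_injective : injective (sval : subalg -> B).
Proof. by move=> [x p] [y q] /= exy; subst y; congr exist; apply: proof_irrelevance. Qed.

Lemma subalg_finitely_generated (l : list B) :
  (forall x, List.In x l -> Y x) -> (forall b, Y b -> Sg (fun x => List.In x l) b) ->
  finitely_generated subalg.
Proof.
move=> lY Yl_gen.
have [lA lA_l] : exists lA : list subalg, map sval lA = l.
  elim: l lY {Yl_gen} => [|c l IHl] lY; first by exists nil.
  have [lA lA_l] := IHl (fun x lx => lY x (or_intror lx)).
  by exists (exist _ c (lY c (or_introl erefl)) :: lA); rewrite /= lA_l.
exists lA => a Z Zsub lAZ.
(* [Z'] collects the elements of [B] all of whose lifts to [subalg] lie in [Z]. *)
pose Z' b := Y b /\ forall p : Y b, Z (exist _ b p).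
have Z'sub : subuniverse Z'.
  move=> f b Z'b; split; first by apply: Y_sub => j; case: (Z'b j).
  move=> p; pose a' : 'I_(arity f) -> subalg := fun j => exist _ (b j) (proj1 (Z'b j)).
  suff <- : ops subalg f a' = exist _ (ops B f b) p.
    by apply: Zsub => j; apply: (proj2 (Z'b j)).
  exact: subalg_incl_injective.
have lZ' x : List.In x l -> Z' x.
  move=> lx; split => [|q]; first exact: lY.
  move: lx; rewrite -lA_l => /List.in_map_iff [a1 [a1_x lA_a1]].
  have -> : exist _ x q = a1 by apply: subalg_incl_injective.
  exact: lAZ.
by case: a => b p; apply: (proj2 (Sg_min Z'sub lZ' (Yl_gen b p))).
Qed.

Lemma quasivariety_subalg (K : algebra S -> Prop) : quasivariety K -> K B -> K subalg.
Proof.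
case=> Kemb _ _; apply: Kemb subalg_incl_hom subalg_incl_injective.
Qed.

End Subalgebra.

Section Epimorphisms.
Variables (S : signature) (K : algebra S -> Prop).

Definition determines (B : algebra S) (l : list B) (b : B) : Prop :=
  forall (C : algebra S) (g1 g2 : B -> C), K C -> is_hom g1 -> is_hom g2 ->
    (forall x, List.In x l -> g1 x = g2 x) -> g1 b = g2 b.

Lemma determines_app_l (B : algebra S) (l l' : list B) b :
  determines l b -> determines (l ++ l') b.
Proof.
move=> lb C g1 g2 KC g1_hom g2_hom gl; apply: lb => // x lx.
by apply: gl; apply: List.in_or_app; left.
Qed.

Lemma determines_app_r (B : algebra S) (l l' : list B) b :
  determines l' b -> determines (l ++ l') b.
Proof.
move=> lb C g1 g2 KC g1_hom g2_hom gl; apply: lb => // x lx.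
by apply: gl; apply: List.in_or_app; right.
Qed.

Definition finite_part (B : algebra S) (X : B -> Prop) :=
  {l : list B | forall x, List.In x l -> X x}.

Lemma finite_part_ultrafilter (B : algebra S) (X : B -> Prop) :
  exists U : (finite_part X -> Prop) -> Prop, ultrafilter U /\
    forall l0 : finite_part X,
      U (fun l => forall x, List.In x (sval l0) -> List.In x (sval l)).
Proof.
pose above (l0 : finite_part X) (Z : finite_part X -> Prop) :=
  forall l, (forall x, List.In x (sval l0) -> List.In x (sval l)) -> Z l.
have above_T : exists l0, above l0 (fun _ => True).
  have nilX x : List.In x nil -> X x by [].
  by exists (exist _ _ nilX).
have above_I Z1 Z2 : (exists l0, above l0 Z1) -> (exists l0, above l0 Z2) ->
    exists l0, above l0 (fun l => Z1 l /\ Z2 l).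
  move=> [l1 l1Z1] [l2 l2Z2].
  have l12X x : List.In x (sval l1 ++ sval l2) -> X x.
    move=> l12x; case: (List.in_app_or _ _ _ l12x).
      exact: (proj2_sig l1).
    exact: (proj2_sig l2).
  exists (exist _ _ l12X) => l l12l; split; [apply: l1Z1|apply: l2Z2] => x lx;
    by apply: l12l; apply: List.in_or_app; auto.
have above_S Z1 Z2 : (exists l0, above l0 Z1) -> (forall l, Z1 l -> Z2 l) ->
    exists l0, above l0 Z2.
  by move=> [l0 l0Z1] Z12; exists l0 => l /l0Z1/Z12.
have above_nonempty Z : (exists l0, above l0 Z) -> exists l, Z l.
  by move=> [l0 l0Z]; exists l0; apply: l0Z.
have [U [Uultra U_above]] := Ultrafilter.ultrafilter_superset above_T above_I above_S above_nonempty.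
by exists U; split => // l0; apply: U_above; exists l0 => l.
Qed.

Lemma epic_in_finite_part (B : algebra S) (X : B -> Prop) (b : B) :
  quasivariety K -> epic_in K X ->
  exists l, (forall x, List.In x l -> X x) /\ determines l b.
Proof.
move=> Kqv Xepic; apply: NNPP => no_part.
have witness (l : finite_part X) :
    exists p : {C : algebra S & ((B -> C) * (B -> C))%type},
      [/\ K (projT1 p), is_hom (projT2 p).1, is_hom (projT2 p).2,
          (forall x, List.In x (sval l) -> (projT2 p).1 x = (projT2 p).2 x) &
          (projT2 p).1 b <> (projT2 p).2 b].
  apply: NNPP => no_witness; apply: no_part; exists (sval l).
  split => [|C g1 g2 KC g1_hom g2_hom gl]; first exact: (proj2_sig l).
  by apply: NNPP => g12b; apply: no_witness; exists (existT _ C (g1, g2)).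
have [p p_spec] := choice _ witness.
pose G1 l := (projT2 (p l)).1; pose G2 l := (projT2 (p l)).2.
have [U [Uultra U_above]] := finite_part_ultrafilter X.
have KF l : K (projT1 (p l)) by case: (p_spec l).
have G1_hom l : is_hom (G1 l) by case: (p_spec l).
have G2_hom l : is_hom (G2 l) by case: (p_spec l).
have Gb : ultraprod_proj U (fun l => G1 l b) = ultraprod_proj U (fun l => G2 l b).
  apply: (Xepic _ _ _ (quasivariety_ultraprod Uultra Kqv KF)
    (ultraprod_hom Uultra G1_hom) (ultraprod_hom Uultra G2_hom)) => x Xx.
  apply/(ultraprod_proj_eq Uultra).
  have xX y : List.In y [:: x] -> X y by case=> [<-|[]].
  have [_ _ US _ _] := Uultra.
  apply: US (U_above (exist _ _ xX)) _ => l lx.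
  by have [_ _ _ G12 _] := p_spec l; apply: G12; apply: lx; left.
have [_ Unot_empty US _ _] := Uultra.
apply: Unot_empty; apply: US ((ultraprod_proj_eq Uultra _ _).1 Gb) _ => l.
by case: (p_spec l).
Qed.

Lemma epic_in_finite_subset (B : algebra S) (X : B -> Prop) (gens : list B) :
  quasivariety K -> epic_in K X -> (forall b, Sg (fun x => List.In x gens) b) ->
  exists l, (forall x, List.In x l -> X x) /\ epic_in K (fun x => List.In x l).
Proof.
move=> Kqv Xepic gens_gen.
have [l [lX l_gens]] : exists l, (forall x, List.In x l -> X x) /\
    forall c, List.In c gens -> determines l c.
  elim: gens {gens_gen} => [|c gens [l [lX l_gens]]]; first by exists nil.
  have [lc [lcX lc_c]] := epic_in_finite_part c Kqv Xepic.
  exists (lc ++ l); split => [x lcl_x|d].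
    by case: (List.in_app_or _ _ _ lcl_x); [apply: lcX|apply: lX].
  by case=> [<-|gd]; [apply: determines_app_l|apply/determines_app_r/l_gens].
exists l; split => // C g1 g2 KC g1_hom g2_hom gl b.
apply: hom_eq_on_Sg (gens_gen b) => // c gc.
exact: l_gens.
Qed.

Lemma epic_in_Sg (B : algebra S) (X : B -> Prop) :
  epic_in K X -> epic_in K (Sg X).
Proof.
move=> Xepic C g1 g2 KC g1_hom g2_hom gSg; apply: Xepic => // x Xx.
by apply: gSg; apply: Sg_incl.
Qed.

Lemma epic_in_subalg_epimorphism (B : algebra S) (Y : B -> Prop)
    (Y_sub : subuniverse Y) (y0 : B) (Y_y0 : Y y0) :
  quasivariety K -> K B -> epic_in K Y ->
  K_epimorphism K (sval : subalg Y_sub Y_y0 -> B).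
Proof.
move=> Kqv KB Yepic; split => //; first exact: quasivariety_subalg.
move=> C g1 g2 KC g1_hom g2_hom gY; apply: Yepic => // y Yy.
exact: (gY (exist _ y Yy)).
Qed.

Lemma epic_in_hom_image (A B : algebra S) (h : A -> B) :
  K_epimorphism K h -> epic_in K (fun b => exists a, h a = b).
Proof.
case=> _ _ _ hepic C g1 g2 KC g1_hom g2_hom g_img; apply: hepic => // a.
by apply: g_img; exists a.
Qed.

End Epimorphisms.

Lemma weak_ES_no_proper_epic (S : signature) (K : algebra S -> Prop) :
  quasivariety K -> weak_ES K ->
  forall B : algebra S, K B -> finitely_generated B ->
  forall X : B -> Prop, subalgebra_univ X -> epic_in K X -> forall b, X b.
Proof.
move=> Kqv KES B KB [gens gens_gen] X [Xsub [x0 X_x0]] Xepic b.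
have [l [lX l_epic]] := epic_in_finite_subset Kqv Xepic gens_gen.
pose Y := Sg (fun x => List.In x (x0 :: l)).
have Ysub : subuniverse Y by apply: Sg_subuniverse.
have Y_x0 : Y x0 by apply: Sg_incl; left.
have YX y : Y y -> X y by apply: Sg_min => // x [<-|/lX].
have Yepic : epic_in K Y.
  apply: epic_in_Sg => C g1 g2 KC g1_hom g2_hom gx.
  by apply: l_epic => // x lx; apply: gx; right.
have Yfg : finitely_generated (subalg Ysub Y_x0).
  by apply: (@subalg_finitely_generated _ _ _ Ysub _ Y_x0 (x0 :: l)) => // x; apply: Sg_incl.
have [[y Yy] /= <-] := KES _ _ _ Yfg (ex_intro _ gens gens_gen)
  (epic_in_subalg_epimorphism Ysub Y_x0 Kqv KB Yepic) b.
exact: YX.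
Qed.

Lemma non_surjective_epi_almost_total (S : signature) (K : algebra S -> Prop)
    (A B : algebra S) (h : A -> B) :
  finitely_generated B -> K_epimorphism K h -> ~ surjective h ->
  exists X : B -> Prop,
    subalgebra_univ X /\ proper_univ X /\ almost_total X /\ epic_in K X.
Proof.
move=> [gens gens_gen] hepi h_nsurj; have [_ _ h_hom _] := hepi.
have [b not_img] : proper_univ (fun b => exists a, h a = b).
  by apply: NNPP => all_img; apply: h_nsurj => b; apply: NNPP => nb; apply: all_img; exists b.
have img_gens_gen y : Sg (fun x => (exists a, h a = x) \/ List.In x gens) y.
  apply: Sg_min (gens_gen y) => [|x gx]; first exact: Sg_subuniverse.
  by apply: Sg_incl; right.
have [Y [Ysub imgY Yproper Ytotal]] :=
  proper_almost_total_extension (image_subuniverse h_hom) (ex_intro _ b not_img) img_gens_gen.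
have [a0] := carrier_inh A.
exists Y; split; first by split=> //; exists (h a0); apply: imgY; exists a0.
do 2!split => //.
move=> C g1 g2 KC g1_hom g2_hom gY; apply: (epic_in_hom_image hepi) => // y img_y.
by apply: gY; apply: imgY.
Qed.

Theorem mainTheorem1 (S : signature) (K : algebra S -> Prop) :
  quasivariety K ->
  (weak_ES K <->
   ~ exists B : algebra S, K B /\ finitely_generated B /\
       exists X : B -> Prop,
         subalgebra_univ X /\ proper_univ X /\ almost_total X /\ epic_in K X).
Proof.
move=> Kqv; split.
- move=> KES [B [KB [Bfg [X [Xsubalg [[b Xb] [_ Xepic]]]]]]].
  by apply: Xb; apply: (weak_ES_no_proper_epic Kqv KES KB Bfg Xsubalg Xepic).
- move=> no_almost_total A B h _ Bfg hepi; apply: NNPP => h_nsurj.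
  have [_ KB _ _] := hepi.
  apply: no_almost_total; exists B; split; [done|split; first done].
  exact: (non_surjective_epi_almost_total Bfg hepi h_nsurj).
Qed.
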